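(* Let $\mathcal{X}$ be finite with $|\mathcal{X}|\ge2$, $P$ a pmf on $\mathcal{X}$ with $P(x)>0$ for all $x$, and $L_{\rm th}>0$ satisfy $$H(P)+\log_2\big(1+1/\sqrt2\big)<L_{\rm th}.$$ Define $$\Delta^*(P)=\inf_{\ell\in\Lambda,\ \mathbb{E}[L]<L_{\rm th}}\ \sup_{z\ge0}\ \sup_{Q}\Big(\sum_{x}\tilde g_{z,Q,P}(x)\ell(x)-\frac{z^2}{2}L_{\rm th}\Big),$$ $Q$ ranging over pmfs on $\mathcal{X}$ and $L=\ell(X)$, $X\sim P$. Then $\Delta^*(P)=\inf_{\ell\in\Lambda,\ \mathbb{E}[L]<L_{\rm th}}\Big(\mathbb{E}[L]+\frac{\mathbb{E}[L^2]}{2(L_{\rm th}-\mathbb{E}[L])}\Big)$, and $$\Delta^*(P)=\max_{z\ge0}\max_{Q}\ \min_{\ell\in\Lambda,\ \mathbb{E}[L]<L_{\rm th}}\Big(\sum_x\tilde g_{z,Q,P}(x)\ell(x)-\frac{z^2}{2}L_{\rm th}\Big)=\max_{z\ge0}\max_{Q}\Big(\sum_{x}\tilde g_{z,Q,P}(x)\log_2\frac{\sum_{x'}\tilde g_{z,Q,P}(x')}{\tilde g_{z,Q,P}(x)}-\frac{z^2}{2}L_{\rm th}\Big).$$ Moreover, if $(z^*,Q^* )$ maximizes the last expression, then $\Delta^*(P)$ is attained uniquely by the lengths $\ell^*(x)=-\log_2P^*(x)$, where $P^*(x)=\tilde g_{z^*,Q^*,P}(x)/\sum_{x'}\tilde 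g_{z^*,Q^*,P}(x')$.
   Context: $\Lambda=\{\ell\in\mathbb{R}_+^{\mathcal{X}}:\sum_{x}2^{-\ell(x)}\le1\}$. $\tilde g_{z,Q,P}(x)=\big(1+\frac{z^2}{2}\big)P(x)+z\sqrt{Q(x)P(x)}$. $H(P)=-\sum_xP(x)\log_2P(x)$. Motivation: $\mathbb{E}[L]+\frac{\mathbb{E}[L^2]}{2(L_{\rm th}-\mathbb{E}[L])}$ is the average waiting time in an M/G/1 FCFS queue with arrival rate $1/L_{\rm th}$ and service times distributed as the codeword length $L$. *)

(* classical reals. Alphabet X = {0, ..., n-1}. *)
From Stdlib Require Import Reals Lra.
Open Scope R_scope.

Fixpoint rsum (n : nat) (f : nat -> R) : R :=
  match n with O => 0 | S k => rsum k f + f k end.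

Definition log2 (x : R) : R := ln x / ln 2.

Definition pmf (n : nat) (Q : nat -> R) : Prop :=
  (forall i, (i < n)%nat -> 0 <= Q i) /\ rsum n Q = 1.

Definition Lambda (n : nat) (l : nat -> R) : Prop :=
  (forall i, (i < n)%nat -> 0 <= l i) /\
  rsum n (fun i => Rpower 2 (- l i)) <= 1.

Definition entropy (n : nat) (P : nat -> R) : R :=
  - rsum n (fun i => P i * log2 (P i)).

Definition gt (z : R) (Q P : nat -> R) (i : nat) : R :=
  (1 + z ^ 2 / 2) * P i + z * sqrt (Q i * P i).

Definition EL (n : nat) (P l : nat -> R) : R := rsum n (fun i => P i * l i).
Definition EL2 (n : nat) (P l : nat -> R) : R := rsum n (fun i => P i * (l i) ^ 2).

Definition feasible (n : nat) (P : nat -> R) (Lth : R) (l : nat -> R) : Prop :=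
  Lambda n l /\ EL n P l < Lth.

Definition Jobj (n : nat) (P : nat -> R) (Lth z : R) (Q l : nat -> R) : R :=
  rsum n (fun i => gt z Q P i * l i) - z ^ 2 / 2 * Lth.

Definition Fobj (n : nat) (P : nat -> R) (Lth z : R) (Q : nat -> R) : R :=
  rsum n (fun i => gt z Q P i * log2 (rsum n (gt z Q P) / gt z Q P i))
  - z ^ 2 / 2 * Lth.

Definition IsSup (S : R -> Prop) (s : R) : Prop := is_lub S s.
Definition IsInf (S : R -> Prop) (m : R) : Prop :=
  (forall x, S x -> m <= x) /\ (forall b, (forall x, S x -> b <= x) -> b <= m).
Definition IsMax (S : R -> Prop) (m : R) : Prop := S m /\ (forall x, S x -> x <= m).

(* inner value: sup_{z>=0} sup_Q J(z,Q,l) (a joint sup equals the iterated sup) *)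
Definition innerSupSet (n : nat) (P : nat -> R) (Lth : R) (l : nat -> R) : R -> Prop :=
  fun v => exists z Q, 0 <= z /\ pmf n Q /\ v = Jobj n P Lth z Q l.

Definition DeltaStar (n : nat) (P : nat -> R) (Lth : R) (D : R) : Prop :=
  IsInf (fun v => exists l, feasible n P Lth l /\ IsSup (innerSupSet n P Lth l) v) D.

Definition queueObj (n : nat) (P : nat -> R) (Lth : R) (l : nat -> R) : R :=
  EL n P l + EL2 n P l / (2 * (Lth - EL n P l)).

(* The inner supremum is computed in closed form: writing [J(z,Q,l)] as
   [E[L] + z sum sqrt(Q P) l - z^2/2 (Lth - E[L])], AM-GM bounds it by the queueing
   objective [E[L] + E[L^2] / (2 (Lth - E[L]))], with equality at
   [z = sqrt(E[L^2]) / (Lth - E[L])] and [Q ∝ P l^2].  For fixed [(z, Q)], Gibbs'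
   inequality shows that [min over Kraft lengths of sum g~ l] is attained exactly at
   [l = log2 (sum g~ / g~)], which gives weak duality [F(z, Q) <= queueObj(l)] and the
   uniqueness statement.  The queueing objective has a minimizer [lo] by compactness,
   and its partial derivatives at [lo] are exactly the weights [g~] for the optimal
   [(z, Q)] of [lo]; minimality over the convex feasible set then makes [lo] minimize
   [sum g~ l] over all Kraft lengths, so [F = queueObj(lo)] at that [(z, Q)] (strong
   duality).  The margin [log2 (1 + 1/sqrt 2)] in the hypothesis is only used through
   [H(P) < Lth], which makes the Shannon lengths feasible. *)

From Stdlib Require Import Reals Lra Lia IndefiniteDescription Classical_Prop.
From Coquelicot Require Import Coquelicot.
Open Scope R_scope.

(** * Finite sums *)

Lemma rsum_ext n f g : (forall i, (i < n)%nat -> f i = g i) -> rsum n f = rsum n g.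
Proof.
  induction n as [|n IH]; intros Hfg; simpl; [reflexivity|].
  rewrite IH by (intros; apply Hfg; lia). rewrite Hfg by lia. reflexivity.
Qed.

Lemma rsum_le n f g : (forall i, (i < n)%nat -> f i <= g i) -> rsum n f <= rsum n g.
Proof.
  induction n as [|n IH]; intros Hfg; simpl; [lra|].
  assert (f n <= g n) by (apply Hfg; lia).
  assert (rsum n f <= rsum n g) by (apply IH; intros; apply Hfg; lia).
  lra.
Qed.

Lemma rsum_lt n f g : (0 < n)%nat -> (forall i, (i < n)%nat -> f i < g i) ->
  rsum n f < rsum n g.
Proof.
  intros Hn Hfg; destruct n as [|n]; [lia|]; simpl.
  assert (f n < g n) by (apply Hfg; lia).
  assert (rsum n f <= rsum n g) by (apply rsum_le; intros; left; apply Hfg; lia).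
  lra.
Qed.

Lemma rsum_plus n f g : rsum n (fun i => f i + g i) = rsum n f + rsum n g.
Proof. induction n as [|n IH]; simpl; [lra|]. rewrite IH; ring. Qed.

Lemma rsum_minus n f g : rsum n (fun i => f i - g i) = rsum n f - rsum n g.
Proof. induction n as [|n IH]; simpl; [lra|]. rewrite IH; ring. Qed.

Lemma rsum_scal n c f : rsum n (fun i => c * f i) = c * rsum n f.
Proof. induction n as [|n IH]; simpl; [lra|]. rewrite IH; ring. Qed.

Lemma rsum_const n c : rsum n (fun _ => c) = INR n * c.
Proof. induction n as [|n IH]; simpl rsum; [simpl; lra|]. rewrite IH, S_INR; ring. Qed.

Lemma rsum_nonneg n f : (forall i, (i < n)%nat -> 0 <= f i) -> 0 <= rsum n f.
Proof.
  intros Hf. rewrite <- (Rmult_0_r (INR n)), <- rsum_const. now apply rsum_le.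
Qed.

Lemma rsum_term_le n f j : (forall i, (i < n)%nat -> 0 <= f i) -> (j < n)%nat ->
  f j <= rsum n f.
Proof.
  induction n as [|n IH]; intros Hf Hj; [lia|]; simpl.
  assert (0 <= f n) by (apply Hf; lia).
  destruct (Nat.eq_dec j n) as [->|Hjn].
  - assert (0 <= rsum n f) by (apply rsum_nonneg; intros; apply Hf; lia). lra.
  - assert (f j <= rsum n f) by (apply IH; [intros; apply Hf|]; lia). lra.
Qed.

Lemma rsum_pos n g : (0 < n)%nat -> (forall i, (i < n)%nat -> 0 < g i) -> 0 < rsum n g.
Proof.
  intros Hn Hg. apply Rlt_le_trans with (g 0%nat); [now apply Hg|].
  apply rsum_term_le; auto. intros; left; auto.
Qed.

Lemma rsum_eq0_nonneg n f : (forall i, (i < n)%nat -> 0 <= f i) -> rsum n f = 0 ->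
  forall i, (i < n)%nat -> f i = 0.
Proof.
  intros Hf Hsum i Hi. pose proof (rsum_term_le n f i Hf Hi). pose proof (Hf i Hi). lra.
Qed.

Lemma is_lim_seq_rsum n (f : nat -> nat -> R) (g : nat -> R) :
  (forall i, (i < n)%nat -> is_lim_seq (fun k => f k i) (g i)) ->
  is_lim_seq (fun k => rsum n (f k)) (rsum n g).
Proof.
  induction n as [|n IH]; intros Hfg; simpl; [apply is_lim_seq_const|].
  apply is_lim_seq_plus'; [apply IH; intros|]; apply Hfg; lia.
Qed.

Lemma positive_lower_bound n (p : nat -> R) : (forall i, (i < n)%nat -> 0 < p i) ->
  exists c, 0 < c /\ forall i, (i < n)%nat -> c <= p i.
Proof.
  induction n as [|n IH]; intros Hp; [exists 1; split; [lra|intros; lia]|].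
  destruct IH as [c [Hc Hcp]]; [intros; apply Hp; lia|].
  exists (Rmin c (p n)); split; [apply Rmin_glb_lt; auto; apply Hp; lia|].
  intros i Hi; destruct (Nat.eq_dec i n) as [->|Hin]; [apply Rmin_r|].
  eapply Rle_trans; [apply Rmin_l| apply Hcp; lia].
Qed.

(** * Gibbs' inequality *)

Lemma ln2_pos : 0 < ln 2.
Proof. rewrite <- ln_1. apply ln_increasing; lra. Qed.

Lemma log2_inv_div a b : 0 < a -> 0 < b -> - log2 (a / b) = log2 (b / a).
Proof.
  intros Ha Hb. unfold log2. replace (b / a) with (/ (a / b)) by (field; lra).
  rewrite ln_Rinv by (apply Rdiv_lt_0_compat; lra). unfold Rdiv at 1 3. ring.
Qed.

Lemma Rpower2_opp_log2 x : 0 < x -> Rpower 2 (- log2 x) = / x.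
Proof.
  intros Hx. unfold Rpower, log2.
  replace (- (ln x / ln 2) * ln 2) with (- ln x) by (pose proof ln2_pos; field; lra).
  rewrite <- ln_Rinv, exp_ln by (try apply Rinv_0_lt_compat; lra). reflexivity.
Qed.

(* Pointwise Gibbs: with [a = l ln 2 - ln (S / g)] both sides become [g (1 - e^-a)] and
   [g a], and [1 - e^-a <= a] with equality only at [a = 0]. *)
Lemma gibbs_term g S l : 0 < g -> 0 < S ->
  g - S * Rpower 2 (- l) <= ln 2 * (g * l - g * log2 (S / g)) /\
  (g - S * Rpower 2 (- l) = ln 2 * (g * l - g * log2 (S / g)) -> l = log2 (S / g)).
Proof.
  intros Hg HS. pose proof ln2_pos.
  set (a := l * ln 2 - ln (S / g)).
  assert (Eright : ln 2 * (g * l - g * log2 (S / g)) = g * a) by (unfold a, log2; field; lra).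
  assert (Eleft : S * Rpower 2 (- l) = g * exp (- a)).
  { unfold a, Rpower. replace (- (l * ln 2 - ln (S / g))) with (- l * ln 2 + ln (S / g)) by ring.
    rewrite exp_plus, exp_ln by (apply Rdiv_lt_0_compat; lra). field; lra. }
  rewrite Eright, Eleft. split.
  - pose proof (exp_ineq1_le (- a)). nra.
  - intros Heq. destruct (Req_dec a 0) as [Ha|Ha].
    + unfold log2. apply (Rmult_eq_reg_r (ln 2)); [|lra]. unfold a in Ha. field_simplify; lra.
    + pose proof (exp_ineq1 (- a) ltac:(lra)). nra.
Qed.

Lemma gibbs_defect n g l :
  let S := rsum n g in
  ln 2 * (rsum n (fun i => g i * l i) - rsum n (fun i => g i * log2 (S / g i))) =
  rsum n (fun i => ln 2 * (g i * l i - g i * log2 (S / g i)) - (g i - S * Rpower 2 (- l i)))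
  + S * (1 - rsum n (fun i => Rpower 2 (- l i))).
Proof.
  intros S. rewrite !rsum_minus, rsum_scal, rsum_minus, rsum_scal. fold S. ring.
Qed.

Section Gibbs.
Variables (n : nat) (g : nat -> R).
Hypothesis Hn : (0 < n)%nat.
Hypothesis Hg : forall i, (i < n)%nat -> 0 < g i.

Lemma Lambda_log2_ratio : Lambda n (fun i => log2 (rsum n g / g i)).
Proof.
  pose proof ln2_pos. pose proof (rsum_pos n g Hn Hg) as HS.
  split.
  - intros i Hi. pose proof (Hg i Hi).
    assert (g i <= rsum n g) by (apply rsum_term_le; auto; intros; left; auto).
    unfold log2. apply Rdiv_le_0_compat; [|lra]. rewrite <- ln_1. apply ln_le; [lra|].
    apply (Rmult_le_reg_r (g i)); auto. field_simplify; lra.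
  - right. rewrite (rsum_ext n _ (fun i => / rsum n g * g i)), rsum_scal by
      (intros i Hi; pose proof (Hg i Hi); rewrite Rpower2_opp_log2 by (apply Rdiv_lt_0_compat; lra);
       field; lra).
    field; lra.
Qed.

Variable l : nat -> R.
Hypothesis Hl : Lambda n l.

Let defect_nonneg : forall i, (i < n)%nat ->
  0 <= ln 2 * (g i * l i - g i * log2 (rsum n g / g i)) - (g i - rsum n g * Rpower 2 (- l i)).
Proof.
  intros i Hi. destruct (gibbs_term (g i) (rsum n g) (l i) (Hg i Hi) (rsum_pos n g Hn Hg)). lra.
Qed.

Lemma gibbs_ineq :
  rsum n (fun i => g i * log2 (rsum n g / g i)) <= rsum n (fun i => g i * l i).
Proof.
  pose proof (gibbs_defect n g l) as Hdef. simpl in Hdef.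
  pose proof (rsum_nonneg _ _ defect_nonneg). pose proof (rsum_pos n g Hn Hg).
  pose proof ln2_pos. destruct Hl as [_ Hkraft].
  assert (0 <= rsum n g * (1 - rsum n (fun i => Rpower 2 (- l i)))) by (apply Rmult_le_pos; lra).
  nra.
Qed.

Lemma gibbs_ineq_eq :
  rsum n (fun i => g i * l i) <= rsum n (fun i => g i * log2 (rsum n g / g i)) ->
  forall i, (i < n)%nat -> l i = log2 (rsum n g / g i).
Proof.
  intros Hle i Hi.
  pose proof (gibbs_defect n g l) as Hdef. simpl in Hdef.
  pose proof (rsum_nonneg _ _ defect_nonneg). pose proof (rsum_pos n g Hn Hg).
  pose proof gibbs_ineq. pose proof ln2_pos. destruct Hl as [_ Hkraft].
  assert (0 <= rsum n g * (1 - rsum n (fun i => Rpower 2 (- l i)))) by (apply Rmult_le_pos; lra).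
  pose proof (rsum_eq0_nonneg _ _ defect_nonneg ltac:(nra) i Hi) as Hz. simpl in Hz.
  apply (gibbs_term (g i) (rsum n g) (l i) (Hg i Hi)); auto. lra.
Qed.

End Gibbs.

(** * The inner supremum *)

Lemma Jobj_expand n P Lth z Q l : Jobj n P Lth z Q l =
  EL n P l + z * rsum n (fun i => sqrt (Q i * P i) * l i) - z ^ 2 / 2 * (Lth - EL n P l).
Proof.
  unfold Jobj, gt, EL.
  rewrite (rsum_ext n _ (fun i => (1 + z^2/2) * (P i * l i) + z * (sqrt (Q i * P i) * l i)))
    by (intros; ring).
  rewrite rsum_plus, !rsum_scal. ring.
Qed.

Lemma sqrt_mul_le q p x u : 0 <= q -> 0 <= p -> 0 < u ->
  sqrt (q * p) * x <= (u * q + p * x ^ 2 / u) / 2.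
Proof.
  intros Hq Hp Hu. rewrite sqrt_mult by auto.
  rewrite <- (sqrt_sqrt q Hq) at 2. rewrite <- (sqrt_sqrt p Hp) at 2.
  set (s := sqrt q). set (t := sqrt p).
  assert (0 <= (u * s - t * x) ^ 2 / u) by (apply Rdiv_le_0_compat; [apply pow2_ge_0|lra]).
  assert ((u * s - t * x) ^ 2 / u = u * (s * s) + t * t * x ^ 2 / u - 2 * (s * t * x))
    by (field; lra).
  lra.
Qed.

Lemma Lambda_exists_ge1 n l : (2 <= n)%nat -> Lambda n l -> exists j, (j < n)%nat /\ 1 <= l j.
Proof.
  intros Hn [_ Hkraft]. apply NNPP. intros Hno.
  assert (Hhalf : rsum n (fun _ => / 2) < rsum n (fun i => Rpower 2 (- l i))).
  { apply rsum_lt; [lia|]. intros i Hi.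
    assert (l i < 1) by (apply Rnot_le_lt; intro; apply Hno; eauto).
    replace (/ 2) with (Rpower 2 (Ropp 1)) by (rewrite Rpower_Ropp, Rpower_1; lra).
    apply Rpower_lt; lra. }
  rewrite rsum_const in Hhalf. apply le_INR in Hn. simpl in Hn. lra.
Qed.

Definition zstar n P Lth l := sqrt (EL2 n P l) / (Lth - EL n P l).
Definition Qstar n P l := fun i => P i * l i ^ 2 / EL2 n P l.

Section InnerSup.
Variables (n : nat) (P : nat -> R) (Lth : R).
Hypothesis HP : forall i, (i < n)%nat -> 0 < P i.

Lemma EL_nonneg l : Lambda n l -> 0 <= EL n P l.
Proof.
  intros [Hl _]. apply rsum_nonneg. intros i Hi. pose proof (HP i Hi). pose proof (Hl i Hi). nra.
Qed.

Lemma EL2_nonneg l : 0 <= EL2 n P l.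
Proof.
  apply rsum_nonneg. intros i Hi. pose proof (HP i Hi). pose proof (pow2_ge_0 (l i)). nra.
Qed.

Lemma EL2_ge_lower_bound c l : (2 <= n)%nat -> (forall i, (i < n)%nat -> c <= P i) ->
  Lambda n l -> c <= EL2 n P l.
Proof.
  intros Hn Hc HL. destruct (Lambda_exists_ge1 n l Hn HL) as [j [Hj Hlj]].
  pose proof (HP j Hj). assert (1 <= l j ^ 2) by nra.
  apply Rle_trans with (P j * l j ^ 2); [pose proof (Hc j Hj); nra|].
  apply (rsum_term_le n (fun i => P i * l i ^ 2)); auto.
  intros i Hi. pose proof (HP i Hi). pose proof (pow2_ge_0 (l i)). nra.
Qed.

Lemma EL2_pos l : (2 <= n)%nat -> Lambda n l -> 0 < EL2 n P l.
Proof.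
  intros Hn HL. destruct (positive_lower_bound n P HP) as [c [Hc Hcp]].
  eapply Rlt_le_trans; [exact Hc| now apply EL2_ge_lower_bound].
Qed.

Lemma queueObj_nonneg l : feasible n P Lth l -> 0 <= queueObj n P Lth l.
Proof.
  intros [HL Hb]. pose proof (EL_nonneg l HL). pose proof (EL2_nonneg l).
  assert (0 <= EL2 n P l / (2 * (Lth - EL n P l))) by (apply Rdiv_le_0_compat; lra).
  unfold queueObj. lra.
Qed.

(* AM-GM with weight [u = z (Lth - E[L])] on each term of [sum sqrt(Q P) l]. *)
Lemma Jobj_le_queueObj z Q l : pmf n Q -> 0 <= z -> EL n P l < Lth ->
  Jobj n P Lth z Q l <= queueObj n P Lth l.
Proof.
  intros [HQ0 HQ1] Hz Hb. rewrite Jobj_expand. unfold queueObj.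
  set (E := EL n P l) in *. set (b := Lth - E).
  assert (Hb' : 0 < b) by (unfold b; lra).
  pose proof (EL2_nonneg l) as HE2. set (E2 := EL2 n P l) in *.
  destruct (Req_dec z 0) as [->|Hz0].
  - assert (0 <= E2 / (2 * b)) by (apply Rdiv_le_0_compat; lra). lra.
  - set (u := z * b). assert (Hu : 0 < u) by (unfold u; nra).
    assert (Hsum : rsum n (fun i => sqrt (Q i * P i) * l i) <= (u + E2 / u) / 2).
    { eapply Rle_trans.
      - apply rsum_le with (g := fun i => (u * Q i + P i * l i ^ 2 / u) / 2).
        intros i Hi. apply sqrt_mul_le; auto. now left; apply HP.
      - rewrite (rsum_ext n _ (fun i => (u / 2) * Q i + / (2 * u) * (P i * l i ^ 2)))
          by (intros; field; lra).
        rewrite rsum_plus, !rsum_scal, HQ1. right. unfold E2, EL2. field. lra. }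
    assert (z * rsum n (fun i => sqrt (Q i * P i) * l i) <= z * ((u + E2 / u) / 2))
      by (apply Rmult_le_compat_l; lra).
    assert (z * ((u + E2 / u) / 2) - z ^ 2 / 2 * b = E2 / (2 * b)) by (unfold u; field; lra).
    lra.
Qed.

Lemma Qstar_pmf l : 0 < EL2 n P l -> pmf n (Qstar n P l).
Proof.
  intros H2. split.
  - intros i Hi. pose proof (HP i Hi). pose proof (pow2_ge_0 (l i)).
    apply Rdiv_le_0_compat; [nra|lra].
  - unfold Qstar. rewrite (rsum_ext n _ (fun i => / EL2 n P l * (P i * l i ^ 2)))
      by (intros; field; lra).
    rewrite rsum_scal. fold (EL2 n P l). field. lra.
Qed.

Lemma sqrt_Qstar l i : 0 < P i -> 0 <= l i -> 0 < EL2 n P l ->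
  sqrt (Qstar n P l i * P i) = P i * l i / sqrt (EL2 n P l).
Proof.
  intros HPi Hli H2. pose proof (sqrt_sqrt _ (Rlt_le _ _ H2)) as Hsq. pose proof (sqrt_lt_R0 _ H2).
  unfold Qstar. rewrite <- sqrt_square with (x := P i * l i / sqrt (EL2 n P l)).
  - f_equal. rewrite <- Hsq at 1. field. lra.
  - apply Rdiv_le_0_compat; [nra|lra].
Qed.

Lemma gt_zstar_Qstar l i : 0 < P i -> 0 <= l i -> 0 < EL2 n P l -> EL n P l < Lth ->
  gt (zstar n P Lth l) (Qstar n P l) P i =
  P i * (1 + EL2 n P l / (2 * (Lth - EL n P l) ^ 2)) + P i * l i / (Lth - EL n P l).
Proof.
  intros HPi Hli H2 Hb. pose proof (sqrt_sqrt _ (Rlt_le _ _ H2)) as Hsq. pose proof (sqrt_lt_R0 _ H2).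
  unfold gt. rewrite sqrt_Qstar by auto. unfold zstar.
  replace ((sqrt (EL2 n P l) / (Lth - EL n P l)) ^ 2) with
    (sqrt (EL2 n P l) * sqrt (EL2 n P l) / (Lth - EL n P l) ^ 2) by (field; lra).
  rewrite Hsq. field. split; lra.
Qed.

Lemma Jobj_zstar_Qstar l : Lambda n l -> 0 < EL2 n P l -> EL n P l < Lth ->
  Jobj n P Lth (zstar n P Lth l) (Qstar n P l) l = queueObj n P Lth l.
Proof.
  intros [Hl _] H2 Hb. pose proof (sqrt_sqrt _ (Rlt_le _ _ H2)) as Hsq. pose proof (sqrt_lt_R0 _ H2).
  rewrite Jobj_expand.
  rewrite (rsum_ext n _ (fun i => / sqrt (EL2 n P l) * (P i * l i ^ 2))).
  2: { intros i Hi. rewrite sqrt_Qstar by auto. field. lra. }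
  rewrite rsum_scal. fold (EL2 n P l). unfold queueObj, zstar.
  replace ((sqrt (EL2 n P l) / (Lth - EL n P l)) ^ 2) with
    (sqrt (EL2 n P l) * sqrt (EL2 n P l) / (Lth - EL n P l) ^ 2) by (field; lra).
  rewrite Hsq. field. split; lra.
Qed.

Lemma innerSup_queueObj l : (2 <= n)%nat -> feasible n P Lth l ->
  IsSup (innerSupSet n P Lth l) (queueObj n P Lth l).
Proof.
  intros Hn [HL Hb]. pose proof (EL2_pos l Hn HL) as H2. split.
  - intros v [z [Q [Hz [HQ ->]]]]. now apply Jobj_le_queueObj.
  - intros b Hub. apply Hub. exists (zstar n P Lth l), (Qstar n P l). split; [|split].
    + apply Rdiv_le_0_compat; [apply sqrt_pos|lra].
    + now apply Qstar_pmf.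
    + symmetry; now apply Jobj_zstar_Qstar.
Qed.

End InnerSup.

(** * Existence of a minimizer *)

Lemma is_lim_seq_inv_S : is_lim_seq (fun k => / INR (S k)) 0.
Proof.
  assert (Hinf : is_lim_seq (fun k => INR (S k)) p_infty).
  { apply (is_lim_seq_incr_1 INR). apply is_lim_seq_INR. }
  exact (is_lim_seq_inv _ _ Hinf ltac:(discriminate)).
Qed.

Lemma inv_S_pos k : 0 < / INR (S k).
Proof. apply Rinv_0_lt_compat, lt_0_INR; lia. Qed.

(* The k-th index is chosen past the (k-1)-th one and within [1 / (k + 1)] of [x]. *)
Lemma ValAdh_subseq u x : ValAdh u x ->
  exists phi : nat -> nat, filterlim phi eventually eventually /\
    is_lim_seq (fun k => u (phi k)) x.
Proof.
  intros Hadh.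
  assert (Hnext : forall p : nat * nat, exists q,
             (fst p <= q)%nat /\ Rabs (u q - x) < / INR (S (snd p))).
  { intros [N k]. destruct (Hadh (fun y => Rabs (y - x) < / INR (S k)) N) as [q [Hq Hux]].
    - exists (mkposreal _ (inv_S_pos k)). intros y Hy. exact Hy.
    - now exists q. }
  destruct (functional_choice _ Hnext) as [next Hnext_spec].
  set (phi := fix phi k := match k with
                           | O => next (0%nat, 0%nat)
                           | S k' => next (S (phi k'), S k') end).
  assert (Hclose : forall k, Rabs (u (phi k) - x) < / INR (S k)).
  { intros [|k]; [apply (Hnext_spec (0%nat, 0%nat))| apply (Hnext_spec (S (phi k), S k))]. }
  exists phi. split.
  - apply eventually_subseq. intros k. apply (Hnext_spec (S (phi k), S k)).
  - apply is_lim_seq_le_le with (u := fun k => x - / INR (S k)) (w := fun k => x + / INR (S k)).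
    + intros k. specialize (Hclose k). apply Rabs_def2 in Hclose. lra.
    + replace (Finite x) with (Finite (x - 0)) by (f_equal; ring). apply is_lim_seq_minus';
        [apply is_lim_seq_const| apply is_lim_seq_inv_S].
    + replace (Finite x) with (Finite (x + 0)) by (f_equal; ring). apply is_lim_seq_plus';
        [apply is_lim_seq_const| apply is_lim_seq_inv_S].
Qed.

Lemma bounded_seq_extract n (M : nat -> R) (u : nat -> nat -> R) :
  (forall k i, (i < n)%nat -> 0 <= u k i <= M i) ->
  exists (phi : nat -> nat) (v : nat -> R), filterlim phi eventually eventually /\
    forall i, (i < n)%nat -> is_lim_seq (fun k => u (phi k) i) (v i).
Proof.
  induction n as [|n IH]; intros Hbd.
  - exists (fun k => k), (fun _ => 0). split; [|intros; lia].
    apply eventually_subseq. intros; lia.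
  - destruct IH as [phi [v [Hphi Hv]]]; [intros k i Hi; apply Hbd; lia|].
    destruct (Bolzano_Weierstrass (fun k => u (phi k) n) (fun c => 0 <= c <= M n)) as [x Hx].
    + apply compact_P3.
    + intros k; apply Hbd; lia.
    + destruct (ValAdh_subseq _ _ Hx) as [psi [Hpsi Hlim]].
      exists (fun k => phi (psi k)), (fun i => if Nat.eq_dec i n then x else v i). split.
      * exact (filterlim_comp _ _ _ psi phi _ _ _ Hpsi Hphi).
      * intros i Hi. destruct (Nat.eq_dec i n) as [->|Hin]; [exact Hlim|].
        apply (is_lim_seq_subseq (fun k => u (phi k) i)); [exact Hpsi|]. apply Hv; lia.
Qed.

Lemma continuous_Rpower2_opp x : continuity_pt (fun y => Rpower 2 (- y)) x.
Proof.
  unfold Rpower. apply continuity_pt_filterlim.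
  apply (ex_derive_continuous (fun y => exp (- y * ln 2))). auto_derive. auto.
Qed.

Lemma IsInf_exists_nonneg (S : R -> Prop) : (exists x, S x) -> (forall x, S x -> 0 <= x) ->
  exists m, IsInf S m.
Proof.
  intros [x Hx] Hnonneg.
  destruct (completeness (fun y => S (- y))) as [M [Hub Hlub]].
  - exists 0. intros y Hy. apply Hnonneg in Hy. lra.
  - exists (- x). now rewrite Ropp_involutive.
  - exists (- M). split.
    + intros y Hy. assert (- y <= M) by (apply Hub; now rewrite Ropp_involutive). lra.
    + intros b Hb. assert (M <= - b) by (apply Hlub; intros y Hy; apply Hb in Hy; lra). lra.
Qed.

Section Minimizer.
Variables (n : nat) (P : nat -> R) (Lth : R).
Hypothesis Hn : (2 <= n)%nat.
Hypothesis HP : forall i, (i < n)%nat -> 0 < P i.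

Lemma feasible_bounded l : feasible n P Lth l ->
  forall i, (i < n)%nat -> 0 <= l i <= Lth / P i.
Proof.
  intros [[Hl _] Hb] i Hi. split; [auto|]. pose proof (HP i Hi).
  apply (Rmult_le_reg_l (P i)); auto. replace (P i * (Lth / P i)) with Lth by (field; lra).
  assert (P i * l i <= EL n P l); [|lra].
  apply (rsum_term_le n (fun j => P j * l j)); auto.
  intros j Hj. pose proof (HP j Hj). pose proof (Hl j Hj). nra.
Qed.

(* [c <= E[L^2] <= 2 (Lth - E[L]) M] keeps [E[L]] uniformly away from [Lth] on a sublevel set. *)
Lemma feasible_slack_bound c M l : 0 < c -> (forall i, (i < n)%nat -> c <= P i) ->
  feasible n P Lth l -> queueObj n P Lth l <= M -> c / (2 * M) <= Lth - EL n P l.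
Proof.
  intros Hc Hcp [HL Hb] Hq. unfold queueObj in Hq.
  pose proof (EL_nonneg n P HP l HL). pose proof (EL2_ge_lower_bound n P HP c l Hn Hcp HL).
  set (b := Lth - EL n P l) in *. assert (Hb' : 0 < b) by (unfold b; lra).
  assert (HE2 : EL2 n P l <= 2 * b * M).
  { assert (Hq' : EL2 n P l / (2 * b) <= M) by lra.
    apply (Rmult_le_compat_l (2 * b)) in Hq'; [|lra].
    replace (2 * b * (EL2 n P l / (2 * b))) with (EL2 n P l) in Hq' by (field; lra). lra. }
  assert (HM : 0 < M) by nra.
  apply (Rmult_le_reg_r (2 * M)); [lra|]. replace (c / (2 * M) * (2 * M)) with c by (field; lra).
  lra.
Qed.

Lemma feasible_limit (w : nat -> nat -> R) (v : nat -> R) s :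
  0 < s -> (forall k, feasible n P Lth (w k)) -> (forall k, s <= Lth - EL n P (w k)) ->
  (forall i, (i < n)%nat -> is_lim_seq (fun k => w k i) (v i)) ->
  feasible n P Lth v /\ is_lim_seq (fun k => queueObj n P Lth (w k)) (queueObj n P Lth v).
Proof.
  intros Hs Hw Hslack Hv.
  assert (LE : is_lim_seq (fun k => EL n P (w k)) (EL n P v)).
  { apply is_lim_seq_rsum. intros i Hi.
    apply is_lim_seq_mult'; [apply is_lim_seq_const| now apply Hv]. }
  assert (LE2 : is_lim_seq (fun k => EL2 n P (w k)) (EL2 n P v)).
  { apply is_lim_seq_rsum. intros i Hi.
    apply is_lim_seq_mult'; [apply is_lim_seq_const|].
    apply is_lim_seq_mult'; [now apply Hv|]. apply is_lim_seq_mult'; [now apply Hv|].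
    apply is_lim_seq_const. }
  assert (LK : is_lim_seq (fun k => rsum n (fun i => Rpower 2 (- w k i)))
                          (rsum n (fun i => Rpower 2 (- v i)))).
  { apply is_lim_seq_rsum. intros i Hi.
    apply (is_lim_seq_continuous (fun y => Rpower 2 (- y))); [apply continuous_Rpower2_opp|].
    now apply Hv. }
  assert (LB : is_lim_seq (fun k => Lth - EL n P (w k)) (Lth - EL n P v))
    by (apply is_lim_seq_minus'; [apply is_lim_seq_const| exact LE]).
  assert (Hsv : s <= Lth - EL n P v) by exact (is_lim_seq_le _ _ _ _ Hslack (is_lim_seq_const s) LB).
  split; [split; [split|]|].
  - intros i Hi. refine (is_lim_seq_le _ _ _ _ _ (is_lim_seq_const 0) (Hv i Hi)).
    intros k. destruct (Hw k) as [[Hl _] _]. now apply Hl.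
  - refine (is_lim_seq_le _ _ _ _ _ LK (is_lim_seq_const 1)).
    intros k. now destruct (Hw k) as [[_ Hkraft] _].
  - lra.
  - apply is_lim_seq_plus'; [exact LE|]. apply is_lim_seq_div'; [exact LE2| |lra].
    apply is_lim_seq_mult'; [apply is_lim_seq_const| exact LB].
Qed.

Lemma queueObj_minimizer_exists : (exists l, feasible n P Lth l) ->
  exists lo, feasible n P Lth lo /\
    forall l, feasible n P Lth l -> queueObj n P Lth lo <= queueObj n P Lth l.
Proof.
  intros [l0 Hl0].
  destruct (IsInf_exists_nonneg (fun v => exists l, feasible n P Lth l /\ v = queueObj n P Lth l))
    as [m [Hlb Hglb]]; [eauto| intros x [l [Hl ->]]; now apply queueObj_nonneg|].
  assert (Hseq : forall k, exists l, feasible n P Lth l /\ queueObj n P Lth l < m + / INR (S k)).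
  { intros k. apply NNPP. intros Hno. pose proof (inv_S_pos k).
    assert (m + / INR (S k) <= m); [|lra].
    apply Hglb. intros x [l [Hl ->]]. apply Rnot_lt_le. intro. apply Hno; eauto. }
  destruct (functional_choice _ Hseq) as [u Hu].
  assert (Hfu : forall k, feasible n P Lth (u k)) by (intros k; apply Hu).
  assert (Hlim : is_lim_seq (fun k => queueObj n P Lth (u k)) m).
  { apply is_lim_seq_le_le with (u := fun _ => m) (w := fun k => m + / INR (S k)).
    - intros k. split; [apply Hlb; eauto| left; apply Hu].
    - apply is_lim_seq_const.
    - replace (Finite m) with (Finite (m + 0)) by (f_equal; ring).
      apply is_lim_seq_plus'; [apply is_lim_seq_const| apply is_lim_seq_inv_S]. }
  destruct (positive_lower_bound n P HP) as [c [Hc Hcp]].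
  assert (Hm : 0 <= m) by (apply Hglb; intros x [l [Hl ->]]; now apply queueObj_nonneg).
  assert (Hslack : forall k, c / (2 * (m + 1)) <= Lth - EL n P (u k)).
  { intros k. apply feasible_slack_bound; auto.
    destruct (Hu k) as [_ Hq]. pose proof (inv_S_pos k).
    assert (/ INR (S k) <= 1); [|lra].
    rewrite <- Rinv_1. apply Rinv_le_contravar; [lra|]. rewrite S_INR. pose proof (pos_INR k). lra. }
  destruct (bounded_seq_extract n (fun i => Lth / P i) u (fun k => feasible_bounded (u k) (Hfu k)))
    as [phi [v [Hphi Hv]]].
  destruct (feasible_limit (fun k => u (phi k)) v (c / (2 * (m + 1)))) as [Hfv Hqv]; auto.
  { apply Rdiv_lt_0_compat; lra. }
  assert (Hqm : queueObj n P Lth v = m).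
  { pose proof (is_lim_seq_subseq _ _ _ Hphi Hlim) as Hm'.
    apply is_lim_seq_unique in Hm', Hqv. rewrite Hm' in Hqv. now injection Hqv. }
  exists v. split; [exact Hfv|]. intros l Hl. rewrite Hqm. apply Hlb. eauto.
Qed.

End Minimizer.

(** * First-order optimality *)

Lemma exp_tangent_le u m : exp m * (1 + (u - m)) <= exp u.
Proof.
  replace (exp u) with (exp m * exp (u - m)) by (rewrite <- exp_plus; f_equal; ring).
  apply Rmult_le_compat_l; [left; apply exp_pos| apply exp_ineq1_le].
Qed.

Lemma Rpower2_opp_convex x y t : 0 <= t <= 1 ->
  Rpower 2 (- (x + t * (y - x))) <= (1 - t) * Rpower 2 (- x) + t * Rpower 2 (- y).
Proof.
  intros Ht. unfold Rpower. set (m := - (x + t * (y - x)) * ln 2).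
  pose proof (exp_tangent_le (- x * ln 2) m). pose proof (exp_tangent_le (- y * ln 2) m).
  assert ((1 - t) * (exp m * (1 + (- x * ln 2 - m))) + t * (exp m * (1 + (- y * ln 2 - m))) = exp m)
    by (unfold m; ring).
  nra.
Qed.

Lemma Lambda_convex n l l' t : 0 <= t <= 1 -> Lambda n l -> Lambda n l' ->
  Lambda n (fun i => l i + t * (l' i - l i)).
Proof.
  intros Ht [Hl Hkraft] [Hl' Hkraft']. split.
  - intros i Hi. pose proof (Hl i Hi). pose proof (Hl' i Hi). nra.
  - eapply Rle_trans.
    + apply rsum_le with (g := fun i => (1 - t) * Rpower 2 (- l i) + t * Rpower 2 (- l' i)).
      intros i Hi. now apply Rpower2_opp_convex.
    + rewrite rsum_plus, !rsum_scal. nra.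
Qed.

Lemma EL_line n P l l' t :
  EL n P (fun i => l i + t * (l' i - l i)) = EL n P l + t * rsum n (fun i => P i * (l' i - l i)).
Proof. unfold EL. rewrite <- rsum_scal, <- rsum_plus. apply rsum_ext; intros; ring. Qed.

Lemma EL2_line n P l l' t :
  EL2 n P (fun i => l i + t * (l' i - l i)) =
  EL2 n P l + 2 * t * rsum n (fun i => P i * l i * (l' i - l i))
  + t ^ 2 * rsum n (fun i => P i * (l' i - l i) ^ 2).
Proof.
  unfold EL2. rewrite <- !rsum_scal, <- !rsum_plus.
  apply rsum_ext; intros; ring.
Qed.

Lemma queue_line_identity E E2 e f h b t : 0 < b -> 0 < b - t * e ->
  (E + t * e) + (E2 + 2 * t * f + t ^ 2 * h) / (2 * (b - t * e)) - (E + E2 / (2 * b)) =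
  t * ((e + (2 * f * b + E2 * e) / (2 * b ^ 2)) +
       t * ((2 * f * b + E2 * e) * e / (2 * b ^ 2) + h / 2) / (b - t * e)).
Proof. intros Hb Hbt. field. lra. Qed.

(* [t] is small enough that [t |e| < b / 2] and [t K / (b - t e) <= - G / 2]. *)
Lemma descent_step G K e b : 0 < b -> G < 0 ->
  exists t, 0 < t <= 1 /\ t * e < b / 2 /\ G + t * K / (b - t * e) < 0.
Proof.
  intros Hb HG. pose proof (Rabs_pos e). pose proof (Rabs_pos K).
  set (t := Rmin 1 (Rmin (b / (2 * (Rabs e + 1))) (- G * b / (4 * (Rabs K + 1))))).
  assert (Ht1 : t <= 1) by apply Rmin_l.
  assert (Ht2 : t <= b / (2 * (Rabs e + 1))) by (eapply Rle_trans; [apply Rmin_r| apply Rmin_l]).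
  assert (Ht3 : t <= - G * b / (4 * (Rabs K + 1))) by (eapply Rle_trans; [apply Rmin_r| apply Rmin_r]).
  assert (Ht0 : 0 < t).
  { apply Rmin_glb_lt; [lra|]. apply Rmin_glb_lt; apply Rdiv_lt_0_compat; nra. }
  assert (Hte : t * Rabs e < b / 2).
  { apply Rle_lt_trans with (b / (2 * (Rabs e + 1)) * Rabs e); [apply Rmult_le_compat_r; lra|].
    apply (Rmult_lt_reg_r (2 * (Rabs e + 1))); [lra|]. field_simplify; nra. }
  pose proof (Rle_abs e). pose proof (Rle_abs (- e)). rewrite Rabs_Ropp in *.
  assert (Hbt : b / 2 < b - t * e) by nra.
  exists t. split; [lra| split; [nra|]].
  assert (HK : t * K / (b - t * e) <= t * Rabs K / (b / 2)).
  { unfold Rdiv. apply Rle_trans with (t * Rabs K * / (b - t * e)).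
    - apply Rmult_le_compat_r; [left; apply Rinv_0_lt_compat; lra|].
      apply Rmult_le_compat_l; [lra| apply Rle_abs].
    - apply Rmult_le_compat_l; [nra|]. apply Rinv_le_contravar; lra. }
  assert (HK' : t * Rabs K / (b / 2) <= - G / 2 * (Rabs K / (Rabs K + 1))).
  { apply Rle_trans with ((- G * b / (4 * (Rabs K + 1))) * Rabs K / (b / 2)).
    - unfold Rdiv. apply Rmult_le_compat_r; [left; apply Rinv_0_lt_compat; lra|].
      apply Rmult_le_compat_r; lra.
    - right. field. lra. }
  assert (Rabs K / (Rabs K + 1) < 1).
  { apply (Rmult_lt_reg_r (Rabs K + 1)); [lra|]. field_simplify; lra. }
  nra.
Qed.

Section FirstOrder.
Variables (n : nat) (P : nat -> R) (Lth : R).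
Hypothesis Hn : (2 <= n)%nat.
Hypothesis HP : forall i, (i < n)%nat -> 0 < P i.
Variable lo : nat -> R.
Hypothesis Hlo : feasible n P Lth lo.
Hypothesis Hlo_min : forall l, feasible n P Lth l -> queueObj n P Lth lo <= queueObj n P Lth l.

Lemma rsum_gt_zstar_Qstar_sub l :
  let b := Lth - EL n P lo in
  let e := rsum n (fun i => P i * (l i - lo i)) in
  rsum n (fun i => gt (zstar n P Lth lo) (Qstar n P lo) P i * l i) -
  rsum n (fun i => gt (zstar n P Lth lo) (Qstar n P lo) P i * lo i) =
  e + (2 * rsum n (fun i => P i * lo i * (l i - lo i)) * b + EL2 n P lo * e) / (2 * b ^ 2).
Proof.
  intros b e. destruct Hlo as [HLo Hb]. pose proof (EL2_pos n P HP lo Hn HLo).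
  assert (Hb' : 0 < b) by (unfold b; lra).
  rewrite <- rsum_minus.
  rewrite (rsum_ext n _ (fun i => (1 + EL2 n P lo / (2 * b ^ 2)) * (P i * (l i - lo i))
                                  + / b * (P i * lo i * (l i - lo i)))).
  - rewrite rsum_plus, !rsum_scal. fold e. field. lra.
  - intros i Hi. rewrite gt_zstar_Qstar by (auto; apply HLo; auto). fold b. field. lra.
Qed.

(* The weights [gt (zstar lo) (Qstar lo) P] are exactly the partial derivatives of
   [queueObj] at [lo], so a Kraft [l] violating this inequality would give a descent
   direction inside the convex feasible set. *)
Lemma queueObj_minimizer_first_order l : Lambda n l ->
  rsum n (fun i => gt (zstar n P Lth lo) (Qstar n P lo) P i * lo i) <=
  rsum n (fun i => gt (zstar n P Lth lo) (Qstar n P lo) P i * l i).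
Proof.
  intros HL. destruct Hlo as [HLo Hb].
  pose proof (rsum_gt_zstar_Qstar_sub l) as Hgrad. cbv zeta in Hgrad.
  apply Rnot_lt_le. intros Hlt.
  set (E := EL n P lo) in *. set (E2 := EL2 n P lo) in *. set (b := Lth - E) in *.
  assert (Hb' : 0 < b) by (unfold b; lra).
  set (e := rsum n (fun i => P i * (l i - lo i))) in *.
  set (f := rsum n (fun i => P i * lo i * (l i - lo i))) in *.
  set (h := rsum n (fun i => P i * (l i - lo i) ^ 2)).
  set (G := e + (2 * f * b + E2 * e) / (2 * b ^ 2)) in *.
  set (K := (2 * f * b + E2 * e) * e / (2 * b ^ 2) + h / 2).
  destruct (descent_step G K e b Hb' ltac:(lra)) as [t [Ht [Hte Hdesc]]].
  assert (Hfeas : feasible n P Lth (fun i => lo i + t * (l i - lo i))).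
  { split; [apply Lambda_convex; auto; lra|]. rewrite EL_line. fold E e. unfold b in Hte. lra. }
  pose proof (Hlo_min _ Hfeas) as Hm. unfold queueObj in Hm. rewrite EL_line, EL2_line in Hm.
  fold E E2 e f h in Hm. replace (Lth - (E + t * e)) with (b - t * e) in Hm by (unfold b; ring).
  pose proof (queue_line_identity E E2 e f h b t Hb' ltac:(lra)) as Hline. fold G K in Hline.
  assert (0 < t * - (G + t * K / (b - t * e))) by (apply Rmult_lt_0_compat; lra).
  fold b in Hm. lra.
Qed.

End FirstOrder.

(** * Duality *)

Lemma log2_pos x : 1 < x -> 0 < log2 x.
Proof.
  intros Hx. unfold log2. apply Rdiv_lt_0_compat; [|apply ln2_pos].
  rewrite <- ln_1. apply ln_increasing; lra.
Qed.

Lemma gt_pos z Q P i : 0 < P i -> 0 <= z -> 0 < gt z Q P i.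
Proof.
  intros HPi Hz. unfold gt. pose proof (sqrt_pos (Q i * P i)). pose proof (pow2_ge_0 z). nra.
Qed.

Lemma EL_shannon n P : pmf n P -> (forall i, (i < n)%nat -> 0 < P i) ->
  EL n P (fun i => log2 (rsum n P / P i)) = entropy n P.
Proof.
  intros [_ HP1] HP. unfold EL, entropy. rewrite HP1.
  rewrite <- (Rmult_1_l (rsum n (fun i => P i * log2 (P i)))), Ropp_mult_distr_l, <- rsum_scal.
  apply rsum_ext. intros i Hi.
  pose proof (HP i Hi). unfold log2. replace (1 / P i) with (/ P i) by (field; lra).
  rewrite ln_Rinv by auto. unfold Rdiv. ring.
Qed.

Section Duality.
Variables (n : nat) (P : nat -> R) (Lth : R).
Hypothesis Hn : (2 <= n)%nat.
Hypothesis HP : forall i, (i < n)%nat -> 0 < P i.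

Lemma Fobj_le_Jobj z Q l : 0 <= z -> Lambda n l -> Fobj n P Lth z Q <= Jobj n P Lth z Q l.
Proof.
  intros Hz HL. unfold Fobj, Jobj.
  pose proof (gibbs_ineq n (gt z Q P) ltac:(lia) (fun i Hi => gt_pos z Q P i (HP i Hi) Hz) l HL).
  lra.
Qed.

Lemma Fobj_le_queueObj z Q l : 0 <= z -> pmf n Q -> feasible n P Lth l ->
  Fobj n P Lth z Q <= queueObj n P Lth l.
Proof.
  intros Hz HQ [HL Hb]. apply Rle_trans with (Jobj n P Lth z Q l).
  - now apply Fobj_le_Jobj.
  - now apply Jobj_le_queueObj.
Qed.

(* Gibbs equality case, applied to the chain [Fobj <= Jobj <= queueObj]. *)
Lemma Fobj_eq_queueObj_lengths zs Qs l : 0 <= zs -> pmf n Qs -> feasible n P Lth l ->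
  Fobj n P Lth zs Qs = queueObj n P Lth l ->
  forall i, (i < n)%nat -> l i = - log2 (gt zs Qs P i / rsum n (gt zs Qs P)).
Proof.
  intros Hzs HQs [HL Hb] HF i Hi.
  assert (Hg : forall j, (j < n)%nat -> 0 < gt zs Qs P j) by (intros; apply gt_pos; auto).
  pose proof (Jobj_le_queueObj n P Lth HP zs Qs l HQs Hzs Hb) as HJ.
  unfold Jobj, Fobj in HJ, HF.
  rewrite log2_inv_div by (auto; apply rsum_pos; auto; lia).
  apply (gibbs_ineq_eq n (gt zs Qs P) ltac:(lia) Hg l HL); [lra|auto].
Qed.

Variable lo : nat -> R.
Hypothesis Hlo : feasible n P Lth lo.
Hypothesis Hlo_min : forall l, feasible n P Lth l -> queueObj n P Lth lo <= queueObj n P Lth l.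

Let zo := zstar n P Lth lo.
Let Qo := Qstar n P lo.

Let zo_nonneg : 0 <= zo.
Proof. apply Rdiv_le_0_compat; [apply sqrt_pos| destruct Hlo; lra]. Qed.

Let Qo_pmf : pmf n Qo.
Proof. apply Qstar_pmf; auto. apply EL2_pos; auto. apply Hlo. Qed.

Let Jobj_zo_Qo : Jobj n P Lth zo Qo lo = queueObj n P Lth lo.
Proof. destruct Hlo as [HL Hb]. apply Jobj_zstar_Qstar; auto. now apply EL2_pos. Qed.

(* Strong duality: by the first-order condition the Gibbs bound is attained at [lo]. *)
Lemma Fobj_zstar_Qstar_minimizer : Fobj n P Lth zo Qo = queueObj n P Lth lo.
Proof.
  apply Rle_antisym; [apply Fobj_le_queueObj; [exact zo_nonneg| exact Qo_pmf| exact Hlo]|].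
  rewrite <- Jobj_zo_Qo. unfold Jobj, Fobj.
  apply Rplus_le_compat_r, (queueObj_minimizer_first_order n P Lth Hn HP lo Hlo Hlo_min).
  apply Lambda_log2_ratio; [lia|]. intros i Hi. apply gt_pos; [now apply HP| exact zo_nonneg].
Qed.

Lemma queueObj_minimizer_IsInf :
  IsInf (fun v => exists l, feasible n P Lth l /\ v = queueObj n P Lth l) (queueObj n P Lth lo).
Proof.
  split; [intros x [l [Hl ->]]; now apply Hlo_min|]. intros b Hb. apply Hb. eauto.
Qed.

Lemma DeltaStar_minimizer : DeltaStar n P Lth (queueObj n P Lth lo).
Proof.
  split.
  - intros x [l [Hl Hs]]. rewrite (is_lub_u _ _ _ Hs (innerSup_queueObj n P Lth HP l Hn Hl)).
    now apply Hlo_min.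
  - intros b Hb. apply Hb. exists lo. split; [exact Hlo|]. now apply innerSup_queueObj.
Qed.

Lemma IsMax_inf_Jobj_minimizer :
  IsMax (fun v => exists z Q, 0 <= z /\ pmf n Q /\
           IsInf (fun w => exists l, feasible n P Lth l /\ w = Jobj n P Lth z Q l) v)
        (queueObj n P Lth lo).
Proof.
  split.
  - exists zo, Qo. split; [exact zo_nonneg|]. split; [exact Qo_pmf|]. split.
    + intros x [l [[HL Hb] ->]]. rewrite <- Fobj_zstar_Qstar_minimizer. now apply Fobj_le_Jobj.
    + intros b Hb. rewrite <- Jobj_zo_Qo. apply Hb. eauto.
  - intros x [z [Q [Hz [HQ [Hlb _]]]]]. apply Rle_trans with (Jobj n P Lth z Q lo).
    + apply Hlb. eauto.
    + apply Jobj_le_queueObj; auto. apply Hlo.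
Qed.

Lemma IsMax_Fobj_minimizer :
  IsMax (fun v => exists z Q, 0 <= z /\ pmf n Q /\ v = Fobj n P Lth z Q) (queueObj n P Lth lo).
Proof.
  split.
  - exists zo, Qo. rewrite Fobj_zstar_Qstar_minimizer. split; [exact zo_nonneg|]. split; [exact Qo_pmf|]. reflexivity.
  - intros x [z [Q [Hz [HQ ->]]]]. now apply Fobj_le_queueObj.
Qed.

Lemma Fobj_maximizer_lengths zs Qs : 0 <= zs -> pmf n Qs ->
  (forall z Q, 0 <= z -> pmf n Q -> Fobj n P Lth z Q <= Fobj n P Lth zs Qs) ->
  let ls := fun i => - log2 (gt zs Qs P i / rsum n (gt zs Qs P)) in
  feasible n P Lth ls /\
  IsSup (innerSupSet n P Lth ls) (queueObj n P Lth lo) /\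
  (forall l, feasible n P Lth l -> IsSup (innerSupSet n P Lth l) (queueObj n P Lth lo) ->
     forall i, (i < n)%nat -> l i = ls i).
Proof.
  intros Hzs HQs Hmax ls.
  assert (HF : Fobj n P Lth zs Qs = queueObj n P Lth lo).
  { apply Rle_antisym; [now apply Fobj_le_queueObj|].
    rewrite <- Fobj_zstar_Qstar_minimizer. now apply Hmax. }
  assert (Hlo_ls : forall i, (i < n)%nat -> lo i = ls i)
    by (apply Fobj_eq_queueObj_lengths; auto).
  assert (Hqueue : queueObj n P Lth ls = queueObj n P Lth lo).
  { unfold queueObj, EL, EL2.
    rewrite (rsum_ext n (fun i => P i * ls i) (fun i => P i * lo i)),
            (rsum_ext n (fun i => P i * ls i ^ 2) (fun i => P i * lo i ^ 2))
      by (intros i Hi; now rewrite Hlo_ls). reflexivity. }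
  assert (Hls : feasible n P Lth ls).
  { destruct Hlo as [[Hl0 Hkraft] Hb]. split; [split|].
    - intros i Hi. rewrite <- Hlo_ls; auto.
    - erewrite rsum_ext; [exact Hkraft|]. intros i Hi. simpl. now rewrite Hlo_ls.
    - unfold EL in *. erewrite rsum_ext; [exact Hb|]. intros i Hi. simpl. now rewrite Hlo_ls. }
  split; [exact Hls|split].
  - rewrite <- Hqueue. now apply innerSup_queueObj.
  - intros l Hl Hs. apply Fobj_eq_queueObj_lengths; auto. rewrite HF.
    exact (is_lub_u _ _ _ Hs (innerSup_queueObj n P Lth HP l Hn Hl)).
Qed.

End Duality.

Theorem theorem4 (n : nat) (P : nat -> R) (Lth : R) :
  (2 <= n)%nat ->
  pmf n P ->
  (forall i, (i < n)%nat -> 0 < P i) ->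
  0 < Lth ->
  entropy n P + log2 (1 + 1 / sqrt 2) < Lth ->
  exists D : R,
    DeltaStar n P Lth D /\
    IsInf (fun v => exists l, feasible n P Lth l /\ v = queueObj n P Lth l) D /\
    IsMax (fun v => exists z Q, 0 <= z /\ pmf n Q /\
             IsInf (fun w => exists l, feasible n P Lth l /\ w = Jobj n P Lth z Q l) v) D /\
    IsMax (fun v => exists z Q, 0 <= z /\ pmf n Q /\ v = Fobj n P Lth z Q) D /\
    (forall zs Qs, 0 <= zs -> pmf n Qs ->
       (forall z Q, 0 <= z -> pmf n Q -> Fobj n P Lth z Q <= Fobj n P Lth zs Qs) ->
       let ls := fun i => - log2 (gt zs Qs P i / rsum n (gt zs Qs P)) in
       feasible n P Lth ls /\
       IsSup (innerSupSet n P Lth ls) D /\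
       (forall l, feasible n P Lth l -> IsSup (innerSupSet n P Lth l) D ->
          forall i, (i < n)%nat -> l i = ls i)).
Proof.
  intros Hn HPpmf HP _ Hent.
  assert (Hshannon : feasible n P Lth (fun i => log2 (rsum n P / P i))).
  { split; [apply Lambda_log2_ratio; auto; lia|]. rewrite EL_shannon by auto.
    assert (0 < log2 (1 + 1 / sqrt 2)); [|lra].
    apply log2_pos. pose proof Rlt_sqrt2_0. assert (0 < 1 / sqrt 2) by (apply Rdiv_lt_0_compat; lra).
    lra. }
  destruct (queueObj_minimizer_exists n P Lth Hn HP (ex_intro _ _ Hshannon)) as [lo [Hlo Hmin]].
  exists (queueObj n P Lth lo). split; [|split; [|split; [|split]]].
  - now apply (DeltaStar_minimizer n P Lth).
  - now apply (queueObj_minimizer_IsInf n P Lth).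
  - now apply (IsMax_inf_Jobj_minimizer n P Lth).
  - now apply (IsMax_Fobj_minimizer n P Lth).
  - now apply (Fobj_maximizer_lengths n P Lth).
Qed.
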